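(* For any tight cut $\partial(X)$ of a connected bipartite cubic graph $H$, with $H_1:=H/\overline{X}\rightarrow\overline{x}$ and $H_2:=H/X\rightarrow x$, \[\rho(H)=\rho(H_1)-\rho_{H_1}(\overline{x})+\rho(H_2)-\rho_{H_2}(x)+\rho_{H_1}(\overline{x})\,\rho_{H_2}(x).\]
   Context: Graphs are loopless but may have parallel edges. A cut $C$ of a matching covered graph is tight if $|C\cap M|=1$ for every perfect matching $M$. $H/\overline{X}\rightarrow\overline{x}$ is $H$ with $\overline{X}=V(H)-X$ shrunk to a single vertex $\overline{x}$, and $H/X\rightarrow x$ is analogous. For a connected bipartite cubic graph $H[A,B]$, a pair $(a,b)$ with $a\in A$, $b\in B$ is $\lambda$-matchable if $H$ has a spanning subgraph in which $a,b$ have degree $3$ and every other vertex degree $1$; $\rho(H)$ is the number of such pairs, and for a vertex $u$, $\rho_H(u)$ is the number of vertices $w$ such that the pair formed by $u$ and $w$ is $\lambda$-matchable. *)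

From HB Require Import structures.
From mathcomp Require Import all_boot all_order all_algebra.
Set Implicit Arguments. Unset Strict Implicit. Unset Printing Implicit Defensive.

Record mgraph := MGraph {
  gV : finType;
  gE : finType;
  gends : gE -> gV * gV }.

Section Graphs.
Variable G : mgraph.

Definition incident (e : gE G) (v : gV G) : bool :=
  ((gends e).1 == v) || ((gends e).2 == v).

Definition loopless : Prop := forall e : gE G, (gends e).1 != (gends e).2.

Definition deg_in (F : {set gE G}) (v : gV G) : nat :=
  #|[set e in F | incident e v]|.

Definition cubic : Prop := forall v : gV G, deg_in [set: gE G] v = 3.

Definition adj : rel (gV G) := fun u v =>
  [exists e : gE G, (gends e == (u, v)) || (gends e == (v, u))].

Definition connected : Prop := forall u v : gV G, connect adj u v.

(* A is one colour class of a bipartition: every edge has exactly one end in A *)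
Definition bipartition (A : {set gV G}) : Prop :=
  forall e : gE G, ((gends e).1 \in A) != ((gends e).2 \in A).

Definition perfect_matching (M : {set gE G}) : Prop :=
  forall v : gV G, deg_in M v = 1.

Definition cut (X : {set gV G}) : {set gE G} :=
  [set e | ((gends e).1 \in X) != ((gends e).2 \in X)].

Definition tight_cut (X : {set gV G}) : Prop :=
  forall M : {set gE G}, perfect_matching M -> #|cut X :&: M| = 1.

Definition lam_matchable (A : {set gV G}) (a b : gV G) : bool :=
  [&& a \in A, b \notin A &
   [exists F : {set gE G},
     [&& deg_in F a == 3, deg_in F b == 3 &
         [forall v, (v != a) ==> (v != b) ==> (deg_in F v == 1)]]]].

Definition rho (A : {set gV G}) : nat :=
  #|[set p : gV G * gV G | lam_matchable A p.1 p.2 ]|.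

Definition rho_at (A : {set gV G}) (u : gV G) : nat :=
  #|[set w : gV G | lam_matchable A u w || lam_matchable A w u ]|.

End Graphs.

(* G / S -> s : shrink the vertex set S to a single new vertex [None];
   vertices outside S are kept as [Some v]; edges with both ends in S are
   deleted; all other edges are kept, with ends in S redirected to [None]. *)
Definition shrink (G : mgraph) (S : {set gV G}) : mgraph :=
  @MGraph (option {v : gV G | v \notin S})
          {e : gE G | ~~ (((gends e).1 \in S) && ((gends e).2 \in S))}
          (fun e => (insub (gends (val e)).1, insub (gends (val e)).2)).

From HB Require Import structures.
From mathcomp Require Import all_boot all_order all_algebra.
From mathcomp Require Import zify.
Set Implicit Arguments. Unset Strict Implicit. Unset Printing Implicit Defensive.

(* Every edge of a bipartite cubic graph lies in a perfect matching (Hall's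
   theorem), so all edges of a tight cut d(X) have their A-ends on the same
   side, say in X; counting degrees on X then gives |X :&: A| = |X :\: A| + 1
   and |d(X)| = 3.  The same count shows that a lambda-subgraph with special
   vertices a in A and b outside A uses one cut edge when a and b lie on the
   same side, all three cut edges when a is in X and b is not, and that the
   remaining configuration is impossible.  Hence the lambda-matchable pairs on
   one side of the cut are those of the contraction of the other side that
   avoid the contracted vertex (the single cut edge is completed by a perfect
   matching through it), and the crossing pairs are exactly the products of a
   pair through xbar in H1 and a pair through x in H2.  Bipartitions of the
   connected contractions are unique up to complement, which leaves rho
   unchanged. *)

Section Hall.
Variables (T U : finType) (r : T -> U -> bool) (u0 : U).

Definition neighbours (W : {set U}) (P : {set T}) : {set U} :=
  [set y in W | [exists x in P, r x y]].

Definition hall_condition (S : {set T}) (W : {set U}) : Prop :=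
  forall P : {set T}, P \subset S -> #|P| <= #|neighbours W P|.

Definition matching_into (S : {set T}) (W : {set U}) (f : T -> U) : Prop :=
  {in S &, injective f} /\ {in S, forall x, f x \in W /\ r x (f x)}.

Lemma neighboursU (W : {set U}) (P Q : {set T}) :
  neighbours W (P :|: Q) = neighbours W P :|: neighbours W Q.
Proof.
apply/setP => y; rewrite !inE -andb_orr; congr (_ && _).
apply/existsP/orP => [[x /andP [/setUP [] Px rxy]]|[] /existsP [x /andP [Px rxy]]].
- by left; apply/existsP; exists x; rewrite Px.
- by right; apply/existsP; exists x; rewrite Px.
- by exists x; rewrite inE Px.
- by exists x; rewrite inE Px orbT.
Qed.

Lemma neighboursD (W V : {set U}) (P : {set T}) : neighbours (W :\: V) P = neighbours W P :\: V.
Proof. by apply/setP => y; rewrite !inE andbA. Qed.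

Lemma matching_intoW (S : {set T}) (W1 W2 : {set U}) (f : T -> U) :
  W1 \subset W2 -> matching_into S W1 f -> matching_into S W2 f.
Proof.
by move=> sW12 [injf fS]; split=> // x /fS [/(subsetP sW12) fxW rxfx].
Qed.

Lemma matching_into_neighbours (S : {set T}) (W : {set U}) (f : T -> U) :
  matching_into S W f -> matching_into S (neighbours W S) f.
Proof.
move=> [injf fS]; split=> // x xS; have [fxW rxfx] := fS x xS.
by split=> //; rewrite inE fxW; apply/existsP; exists x; rewrite xS.
Qed.

Lemma matching_into_glue (S P : {set T}) (W1 W2 : {set U}) (f1 f2 : T -> U) :
  P \subset S -> [disjoint W1 & W2] ->
  matching_into P W1 f1 -> matching_into (S :\: P) W2 f2 ->
  matching_into S (W1 :|: W2) (fun x => if x \in P then f1 x else f2 x).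
Proof.
move=> sPS dW [inj1 f1P] [inj2 f2SP].
have f2W x : x \in S -> x \notin P -> f2 x \in W2 /\ r x (f2 x).
  by move=> xS xP; apply: f2SP; rewrite inE xP.
split=> [x y xS yS|x xS].
  case: (boolP (x \in P)) => xP; case: (boolP (y \in P)) => yP.
  - exact: inj1.
  - by move=> exy; have := disjointFr dW (f1P x xP).1; rewrite exy (f2W y yS yP).1.
  - by move=> exy; have := disjointFr dW (f1P y yP).1; rewrite -exy (f2W x xS xP).1.
  - by apply: inj2; rewrite inE ?xP ?yP.
case: (boolP (x \in P)) => xP.
  by have [fxW rxfx] := f1P x xP; rewrite inE fxW.
by have [fxW rxfx] := f2W x xS xP; rewrite inE fxW orbT.
Qed.

Section Step.
Variable n : nat.
Hypothesis IHn : forall S : {set T}, #|S| <= n ->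
  forall W : {set U}, hall_condition S W -> exists f, matching_into S W f.
Variables (S : {set T}) (W : {set U}).
Hypotheses (leSn : #|S| <= n.+1) (hallSW : hall_condition S W).

Lemma hall_critical (P : {set T}) : P \proper S -> P != set0 -> #|neighbours W P| <= #|P| ->
  exists f, matching_into S W f.
Proof.
move=> ltPS P0 tightP; have sPS := proper_sub ltPS.
have [f1 mf1] : exists f, matching_into P W f.
  by apply: IHn => [|Q sQP]; [have := proper_card ltPS; lia | apply/hallSW/(subset_trans sQP)].
have [f2 mf2] : exists f, matching_into (S :\: P) (W :\: neighbours W P) f.
  apply: IHn => [|Q sQSP].
    by have := cardsD S P; rewrite (setIidPr sPS); have := card_gt0 P; rewrite P0; lia.
  have QP0 : [disjoint Q & P].
    apply/pred0P => x /=; apply/negbTE/andP => -[/(subsetP sQSP)].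
    by rewrite inE => /andP [/negbTE ->].
  have sQPS : Q :|: P \subset S by rewrite subUset sPS (subset_trans sQSP (subsetDl _ _)).
  have := hallSW sQPS.
  rewrite neighboursU neighboursD cardsU (disjoint_setI0 QP0) cards0.
  have := cardsU (neighbours W Q) (neighbours W P).
  have := cardsD (neighbours W Q) (neighbours W P).
  have := subset_leq_card (subsetIr (neighbours W Q) (neighbours W P)); lia.
exists (fun x => if x \in P then f1 x else f2 x).
apply: matching_intoW (matching_into_glue sPS _ (matching_into_neighbours mf1) mf2).
  by rewrite subUset subsetDl andbT; apply/subsetP => y; rewrite inE => /andP [].
by rewrite disjoints_subset; apply/subsetP => y yN; rewrite in_setC in_setD yN.
Qed.

Lemma hall_surplus :
  (forall P : {set T}, P \proper S -> P != set0 -> #|P| < #|neighbours W P|) ->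
  exists f, matching_into S W f.
Proof.
move=> surplus; have [->|[x xS]] := set_0Vmem S.
  by exists (fun=> u0); split=> z; rewrite inE.
have : 0 < #|neighbours W [set x]| by rewrite -(cards1 x); apply: hallSW; rewrite sub1set.
rewrite card_gt0 => /set0Pn [y]; rewrite inE => /andP [yW /existsP [z /andP [/set1P -> rxy]]].
have [f2 mf2] : exists f, matching_into (S :\ x) (W :\ y) f.
  apply: IHn => [|Q sQSx]; first by have := cardsD1 x S; rewrite xS; lia.
  have [->|[q qQ]] := set_0Vmem Q; first by rewrite cards0.
  have ltQS : Q \proper S.
    apply/properP; split; first exact: subset_trans sQSx (subsetDl _ _).
    by exists x => //; apply/negP => /(subsetP sQSx); rewrite !inE eqxx.
  have := surplus Q ltQS; rewrite (_ : Q != set0) => [/(_ isT)|]; last by apply/set0Pn; exists q.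
  by rewrite neighboursD; have := cardsD1 y (neighbours W Q); lia.
exists (fun z => if z \in [set x] then y else f2 z).
apply: matching_intoW (matching_into_glue (W1 := [set y]) _ _ _ mf2).
- by rewrite subUset sub1set yW subsetDl.
- by rewrite sub1set.
- by rewrite disjoints_subset sub1set !inE eqxx.
- by split=> [u v /set1P -> /set1P ->|u /set1P ->]; rewrite ?inE.
Qed.

End Step.

Theorem hall_marriage (S : {set T}) (W : {set U}) :
  hall_condition S W -> exists f, matching_into S W f.
Proof.
elim: #|S| {-2}S (leqnn #|S|) W => [|n IHn] {}S leSn W hallSW.
  by exists (fun=> u0); split=> x; move: leSn; rewrite leqn0 cards_eq0 => /eqP ->; rewrite inE.
have [/existsP [P /and3P [ltPS P0 tightP]]|no_critical] :=
  boolP [exists P : {set T}, [&& P \proper S, P != set0 & #|neighbours W P| <= #|P|]].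
  exact: (hall_critical IHn leSn hallSW ltPS P0 tightP).
apply: (hall_surplus IHn leSn hallSW) => P ltPS P0; rewrite ltnNge.
by apply: contraNN no_critical => tightP; apply/existsP; exists P; rewrite ltPS P0.
Qed.

End Hall.

Lemma sum_nat_pred1 (T : finType) (P : {set T}) (a : T) :
  \sum_(v in P) ((v == a) : nat) = (a \in P).
Proof.
have [aP|aP] := boolP (a \in P); last by rewrite big1 // => v vP; case: eqP vP aP => // -> ->.
by rewrite (bigD1 a) //= eqxx big1 // => v /andP [_ /negbTE ->].
Qed.

Lemma card_set1d (T : finType) (x : T) (p : pred T) : #|[set y in [set x] | p y]| = p x.
Proof.
have eq_x y : (y \in [set y in [set x] | p y]) = (y == x) && p x.
  by rewrite !inE; case: eqP => // ->.
case px: (p x).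
  by apply/eqP/cards1P; exists x; apply/setP => y; rewrite eq_x px andbT inE.
by apply/eqP; rewrite cards_eq0; apply/eqP/setP => y; rewrite eq_x px andbF inE.
Qed.

Section Degrees.
Variable G : mgraph.
Implicit Types (F M : {set gE G}) (P K : {set gV G}) (a b v : gV G).

Definition lam_subgraph F a b : bool :=
  [&& deg_in F a == 3, deg_in F b == 3 &
      [forall v, (v != a) ==> (v != b) ==> (deg_in F v == 1)]].

Lemma lam_matchableE A a b :
  lam_matchable A a b = [&& a \in A, b \notin A & [exists F, lam_subgraph F a b]].
Proof. by []. Qed.

Lemma lam_subgraphC F a b : lam_subgraph F a b = lam_subgraph F b a.
Proof.
rewrite /lam_subgraph andbA [(_ == 3) && _]andbC -andbA; congr [&& _, _ & _].
by apply/forallP/forallP => h v; have := h v; case: (v != a); case: (v != b).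
Qed.

Lemma lam_subgraphP F a b :
  reflect [/\ deg_in F a = 3, deg_in F b = 3 &
              forall v, v != a -> v != b -> deg_in F v = 1]
          (lam_subgraph F a b).
Proof.
apply: (iffP and3P) => [[/eqP da /eqP db /forallP dv]|[da db dv]].
  by split=> // v va vb; move: (dv v); rewrite va vb => /eqP.
split; rewrite ?da ?db //.
by apply/forallP => v; apply/implyP => va; apply/implyP => vb; rewrite dv.
Qed.

Lemma deg_in_eq F F' v :
  (forall e, incident e v -> (e \in F) = (e \in F')) -> deg_in F v = deg_in F' v.
Proof.
move=> eqF; apply: eq_card => e; rewrite !inE.
by case: (boolP (incident e v)) => [/eqF ->|]; rewrite ?andbF.
Qed.

Lemma sum_deg_perfect_matching M P : perfect_matching M -> \sum_(v in P) deg_in M v = #|P|.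
Proof. by move=> pmM; rewrite (eq_bigr (fun=> 1)) ?sum1_card. Qed.

Lemma sum_deg_lam_subgraph F a b P : a != b -> lam_subgraph F a b ->
  \sum_(v in P) deg_in F v = #|P| + 2 * (a \in P) + 2 * (b \in P).
Proof.
move=> ab /lam_subgraphP [da db dv].
rewrite (eq_bigr (fun v => 1 + 2 * (v == a) + 2 * (v == b))); last first.
  move=> v _; have [->|va] := eqVneq v a; first by rewrite da (negbTE ab).
  by have [->|vb] := eqVneq v b; rewrite ?db ?dv.
by rewrite !big_split /= sum1_card !sum_nat_pred1 big1 //; lia.
Qed.

Lemma cutC K : cut (~: K) = cut K.
Proof. by apply/setP => e; rewrite !inE; case: (_ \in K); case: (_ \in K). Qed.

Lemma tight_cutC K : tight_cut (~: K) <-> tight_cut K.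
Proof. by rewrite /tight_cut cutC. Qed.

Lemma tight_cut_matching_edge K M e : tight_cut K -> perfect_matching M ->
  e \in M -> e \in cut K -> M :&: cut K = [set e].
Proof.
move=> tightK pmM eM eK; have /eqP/cards1P [e' KMe'] := tightK M pmM.
have : e \in cut K :&: M by rewrite inE eK eM.
by rewrite [M :&: _]setIC KMe' => /set1P ->.
Qed.

End Degrees.

Section Bipartite.
Variables (G : mgraph) (A : {set gV G}).
Hypothesis bipA : bipartition A.
Implicit Types (F M : {set gE G}) (P K : {set gV G}) (e : gE G) (a b v : gV G).

Lemma bipartitionC : bipartition (~: A).
Proof. by move=> e; rewrite !inE (inj_eq negb_inj). Qed.

Definition aend e : gV G := if (gends e).1 \in A then (gends e).1 else (gends e).2.
Definition bend e : gV G := if (gends e).1 \in A then (gends e).2 else (gends e).1.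

Lemma aend_in e : aend e \in A.
Proof. by move: (bipA e); rewrite /aend; case: ifP => // _; case: (_ \in A). Qed.

Lemma bend_notin e : bend e \notin A.
Proof. by move: (bipA e); rewrite /bend; case: ifP => [_|/negbT //]; case: (_ \in A). Qed.

Lemma incidentE e v : incident e v = (aend e == v) || (bend e == v).
Proof. by rewrite /incident /aend /bend; case: ifP; rewrite // orbC. Qed.

Lemma incident_in e v : v \in A -> incident e v = (aend e == v).
Proof.
move=> vA; rewrite incidentE; case: (eqVneq (bend e) v) => [bv|_]; last by rewrite orbF.
by rewrite -bv (negbTE (bend_notin e)) in vA.
Qed.

Lemma incident_notin e v : v \notin A -> incident e v = (bend e == v).
Proof.
move=> vA; rewrite incidentE; case: (eqVneq (aend e) v) => [av|//].
by rewrite -av aend_in in vA.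
Qed.

Lemma cutE K e : (e \in cut K) = ((aend e \in K) != (bend e \in K)).
Proof. by rewrite inE /aend /bend; case: ifP => _ //; rewrite eq_sym. Qed.

Lemma sum_deg_in F P : P \subset A ->
  \sum_(v in P) deg_in F v = #|[set e in F | aend e \in P]|.
Proof.
move=> sPA; rewrite -sum1_card (partition_big aend (mem P)) => [|e /setIdP []//].
apply: eq_bigr => v vP; rewrite /deg_in -sum1_card; apply: eq_bigl => e.
rewrite !inE (incident_in _ (subsetP sPA v vP)).
by case: (eqVneq (aend e) v) => [->|]; rewrite ?vP ?andbT ?andbF.
Qed.

Lemma sum_deg_notin F P : P \subset ~: A ->
  \sum_(v in P) deg_in F v = #|[set e in F | bend e \in P]|.
Proof.
move=> sPB; rewrite -sum1_card (partition_big bend (mem P)) => [|e /setIdP []//].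
apply: eq_bigr => v vP; have := subsetP sPB v vP; rewrite inE => vA.
rewrite /deg_in -sum1_card; apply: eq_bigl => e.
rewrite !inE (incident_notin _ vA).
by case: (eqVneq (bend e) v) => [->|]; rewrite ?vP ?andbT ?andbF.
Qed.

(* Both sums count the edges of [F] with both ends in [K], plus the edges of
   [F] leaving [K] through their [A]-end, resp. through their other end. *)
Lemma sum_deg_shore F K :
  \sum_(v in K :&: A) deg_in F v + #|[set e in F :&: cut K | bend e \in K]| =
  \sum_(v in K :\: A) deg_in F v + #|[set e in F :&: cut K | aend e \in K]|.
Proof.
rewrite sum_deg_in ?subsetIr // sum_deg_notin; last by apply/subsetP => v; rewrite !inE => /andP [].
set inner := [set e in F | (aend e \in K) && (bend e \in K)].
move: (cut K) (cutE K) => C inC.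
have splitA :
    #|[set e in F | aend e \in K :&: A]| = #|inner| + #|[set e in F :&: C | aend e \in K]|.
  rewrite -(cardsID [set e | bend e \in K]); congr (_ + _); apply: eq_card => e;
  by rewrite !inE aend_in ?inC; case: (e \in F); case: (aend e \in K); case: (bend e \in K).
have splitB :
    #|[set e in F | bend e \in K :\: A]| = #|inner| + #|[set e in F :&: C | bend e \in K]|.
  rewrite -(cardsID [set e | aend e \in K]); congr (_ + _); apply: eq_card => e;
  by rewrite !inE bend_notin ?inC; case: (e \in F); case: (aend e \in K); case: (bend e \in K).
lia.
Qed.

End Bipartite.

Lemma aendC (G : mgraph) (A : {set gV G}) (e : gE G) : aend (~: A) e = bend A e.
Proof. by rewrite /aend /bend inE; case: (_ \in A). Qed.

Section CubicBipartite.
Variables (G : mgraph) (A : {set gV G}).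
Hypotheses (bipA : bipartition A) (cubicG : cubic G).
Implicit Types (F M : {set gE G}) (P K : {set gV G}) (e : gE G) (a b v : gV G).

Lemma sum_deg_cubic P : \sum_(v in P) deg_in [set: gE G] v = 3 * #|P|.
Proof. by rewrite (eq_bigr (fun=> 3)) => [|v _]; rewrite ?cubicG // sum_nat_const mulnC. Qed.

Lemma card_aend_in P : P \subset A -> #|[set e | aend A e \in P]| = 3 * #|P|.
Proof.
move=> sP.
rewrite (eq_card (B := [set e in [set: gE G] | aend A e \in P])) => [|e]; last by rewrite !inE.
by rewrite -sum_deg_in // sum_deg_cubic.
Qed.

Lemma card_bend_in P : P \subset ~: A -> #|[set e | bend A e \in P]| = 3 * #|P|.
Proof.
move=> sP.
rewrite (eq_card (B := [set e in [set: gE G] | bend A e \in P])) => [|e]; last by rewrite !inE.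
by rewrite -sum_deg_notin // sum_deg_cubic.
Qed.

Lemma card_bipartition : #|A| = #|~: A|.
Proof.
have := card_aend_in (subxx A); have := card_bend_in (subxx (~: A)).
rewrite (eq_card (B := [set: gE G])) => [|e]; last by rewrite !inE (bend_notin bipA).
rewrite (eq_card (B := [set: gE G])) => [|e]; last by rewrite !inE (aend_in bipA).
lia.
Qed.

Lemma perfect_matching_imset (g : gV G -> gE G) :
  {in A, forall a, aend A (g a) = a} -> {in A &, injective (bend A \o g)} ->
  perfect_matching [set g a | a in A].
Proof.
move=> gaK inj_bg v; rewrite /deg_in.
have onto : [set bend A (g a) | a in A] = ~: A.
  apply/eqP; rewrite eqEcard card_in_imset // -card_bipartition leqnn andbT.
  by apply/subsetP => _ /imsetP [a _ ->]; rewrite inE (bend_notin bipA).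
have [vA|vB] := boolP (v \in A).
  apply/eqP/cards1P; exists (g v); apply/setP => e; rewrite !inE (incident_in bipA) //.
  apply/andP/eqP => [[/imsetP [a aA ->] /eqP] | ->]; first by rewrite gaK // => ->.
  by split; [apply/imsetP; exists v | rewrite gaK].
have /imsetP [a aA ->] : v \in [set bend A (g a) | a in A] by rewrite onto inE.
apply/eqP/cards1P; exists (g a); apply/setP => e.
rewrite !inE (incident_notin bipA) ?(bend_notin bipA) //.
apply/andP/eqP => [[/imsetP [a' a'A ->] /eqP /inj_bg ->]|->] //.
by split=> //; apply/imsetP; exists a.
Qed.

Definition edge_between a b : bool := [exists e, (aend A e == a) && (bend A e == b)].

(* Removing both ends of an edge [e0] costs one neighbour at most, while the
   3 |P| edges at a set [P] of A-vertices other than [aend e0] miss [e0]. *)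
Lemma hall_condition_edge e0 :
  hall_condition edge_between (A :\ aend A e0) (~: A :\ bend A e0).
Proof.
move=> P sPS; have sPA : P \subset A := subset_trans sPS (subsetDl _ _).
set N := neighbours edge_between (~: A) P.
have sNB : N \subset ~: A by apply/subsetP => y; rewrite inE => /andP [].
rewrite neighboursD -/N.
have sub : [set e | aend A e \in P] \subset [set e | bend A e \in N].
  apply/subsetP => e; rewrite !inE => eP; rewrite (bend_notin bipA) /=.
  by apply/existsP; exists (aend A e); rewrite eP; apply/existsP; exists e; rewrite !eqxx.
have := card_aend_in sPA; have := card_bend_in sNB; have := cardsD1 (bend A e0) N.
have [b0N|b0N] := boolP (bend A e0 \in N); last by have := subset_leq_card sub; lia.
suff /proper_card : [set e | aend A e \in P] \proper [set e | bend A e \in N] by lia.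
apply/properP; split => //; exists e0; first by rewrite inE.
by rewrite inE; apply/negP => /(subsetP sPS); rewrite !inE eqxx.
Qed.

Lemma perfect_matching_edge e0 : exists2 M, perfect_matching M & e0 \in M.
Proof.
set a0 := aend A e0; set b0 := bend A e0.
have [f [inj_f fP]] := hall_marriage a0 (@hall_condition_edge e0).
pose g a := if a == a0 then e0 else odflt e0 [pick e | (aend A e == a) && (bend A e == f a)].
have gP a : a \in A :\ a0 -> aend A (g a) = a /\ bend A (g a) = f a.
  move=> aS; have [_ /existsP [e eP]] := fP a aS; rewrite /g; have /setD1P [/negbTE -> _] := aS.
  by case: pickP => [e' /andP [/eqP -> /eqP ->] | /(_ e)]; last by rewrite eP.
exists [set g a | a in A]; last by apply/imsetP; exists a0; rewrite ?(aend_in bipA) // /g eqxx.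
have bend_g x : x \in A -> bend A (g x) = if x == a0 then b0 else f x.
  move=> xA; have [->|xa0] := eqVneq x a0; first by rewrite /g eqxx.
  by have [] := gP x; rewrite ?inE ?xa0.
have f_neq_b0 x : x \in A :\ a0 -> (f x == b0) = false.
  by move=> xS; have [] := fP x xS; rewrite !inE => /andP [/negbTE].
apply: perfect_matching_imset => [a aA|a a' aA a'A /=].
  by have [->|a0a] := eqVneq a a0; [rewrite /g eqxx | have [] := gP a; rewrite ?inE ?a0a].
rewrite !bend_g //; have [->|aa0] := eqVneq a a0; have [->|a'a0] := eqVneq a' a0 => //.
- by move/esym/eqP; rewrite f_neq_b0 // !inE a'a0.
- by move/eqP; rewrite f_neq_b0 // !inE aa0.
- by apply: inj_f; rewrite !inE ?aa0 ?a'a0.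
Qed.

Lemma exists_perfect_matching : exists M, perfect_matching M.
Proof.
case: (pickP [pred e : gE G | true]) => [e _|noE].
  by have [M pmM _] := perfect_matching_edge e; exists M.
exists set0 => v; have /set0Pn [e _] : [set e in [set: gE G] | incident e v] != set0.
  by rewrite -card_gt0 -/(deg_in _ v) cubicG.
by have := noE e.
Qed.

(* Two perfect matchings through cut edges oriented oppositely would give
   [K] both one more and one fewer vertex in [A] than outside [A]. *)
Lemma tight_cut_shore K : tight_cut K ->
  {in cut K, forall e, aend A e \in K} \/ {in cut K, forall e, bend A e \in K}.
Proof.
move=> tightK; have [aendK|] := boolP [forall e in cut K, aend A e \in K].
  by left => e eK; move/forall_inP: aendK; apply.
rewrite negb_forall_in => /existsP [e1 /andP [e1K a1K]]; right => e2 e2K.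
apply/negPn/negP => b2K.
have b1K : bend A e1 \in K by move: e1K; rewrite (cutE A) (negbTE a1K); case: (_ \in K).
have a2K : aend A e2 \in K by move: e2K; rewrite (cutE A) (negbTE b2K); case: (_ \in K).
have [M1 pmM1 e1M1] := perfect_matching_edge e1; have [M2 pmM2 e2M2] := perfect_matching_edge e2.
have := sum_deg_shore bipA M1 K; have := sum_deg_shore bipA M2 K.
rewrite (tight_cut_matching_edge tightK pmM1 e1M1 e1K).
rewrite (tight_cut_matching_edge tightK pmM2 e2M2 e2K) !sum_deg_perfect_matching //.
rewrite !card_set1d b1K a2K (negbTE a1K) (negbTE b2K); lia.
Qed.

Section TightShore.
Variable K : {set gV G}.
Hypotheses (tightK : tight_cut K) (aendK : {in cut K, forall e, aend A e \in K}).

Lemma sum_deg_tight F :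
  \sum_(v in K :&: A) deg_in F v = \sum_(v in K :\: A) deg_in F v + #|F :&: cut K|.
Proof.
have := sum_deg_shore bipA F K.
rewrite (_ : [set e in F :&: cut K | bend A e \in K] = set0) ?cards0 ?addn0; last first.
  apply/setP => e; rewrite in_set0 in_set in_setI.
  have [eK|] := boolP (e \in cut K); rewrite ?andbF //.
  by move: (eK); rewrite (cutE A) (aendK eK); case: (bend A e \in K); rewrite ?andbF.
move=> ->; congr (_ + _); apply: eq_card => e; rewrite in_set !in_setI.
have [eK|_] := boolP (e \in cut K); last by rewrite !andbF.
by rewrite (aendK eK) !andbT.
Qed.

Lemma card_tight_shore : #|K :&: A| = #|K :\: A| + 1.
Proof.
have [M pmM] := exists_perfect_matching.
by have := sum_deg_tight M; rewrite !sum_deg_perfect_matching // [M :&: _]setIC (tightK pmM).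
Qed.

Lemma card_tight_cut : #|cut K| = 3.
Proof.
have := sum_deg_tight [set: gE G]; rewrite setTI.
by rewrite !sum_deg_cubic card_tight_shore; lia.
Qed.

Lemma card_lam_cut F a b : a \in A -> b \notin A -> lam_subgraph F a b ->
  #|F :&: cut K| + 2 * (b \in K) = 1 + 2 * (a \in K).
Proof.
move=> aA bA lamF; have ab : a != b by apply: contraNneq bA => <-.
have := sum_deg_tight F; rewrite !(sum_deg_lam_subgraph _ ab lamF) !inE aA (negbTE bA) /= !andbT.
by have := card_tight_shore; lia.
Qed.

End TightShore.

End CubicBipartite.

Lemma adj_sym (G : mgraph) : symmetric (@adj G).
Proof. by move=> u v; apply/existsP/existsP => -[e ends]; exists e; rewrite orbC. Qed.

Section Shrink.
Variables (G : mgraph) (S : {set gV G}).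
Implicit Types (F : {set gE G}) (Fs : {set gE (shrink S)}) (e : gE G) (es : gE (shrink S)).
Implicit Types (v x : gV G) (A : {set gV G}).

Definition shrinkv v : gV (shrink S) := insub v.

Definition inner_edges : {set gE G} := [set e | ((gends e).1 \in S) && ((gends e).2 \in S)].

Definition shrinkE F : {set gE (shrink S)} := [set es | val es \in F].

Definition expandE Fs : {set gE G} := val @: Fs.

Lemma gends_shrink es : gends es = (shrinkv (gends (val es)).1, shrinkv (gends (val es)).2).
Proof. by []. Qed.

Lemma shrinkv_None v : (shrinkv v == None) = (v \in S).
Proof. by rewrite /shrinkv; case: insubP => [u /negbTE -> _|/negPn ->]. Qed.

Lemma shrinkv_eq x v : v \notin S -> (shrinkv x == shrinkv v) = (x == v).
Proof.
move=> vS; rewrite /shrinkv (insubT (fun x => x \notin S) vS).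
case: insubP => [u xS <-|/negPn xS]; last by apply/esym/negbTE; apply: contraNneq vS => <-.
by rewrite (inj_eq (@Some_inj _)) -(inj_eq val_inj) SubK.
Qed.

Lemma shrinkvP (w : gV (shrink S)) : w = None \/ exists2 v, v \notin S & w = shrinkv v.
Proof.
case: w => [[v vS]|]; last by left.
by right; exists v; rewrite // /shrinkv (insubT (fun x => x \notin S) vS).
Qed.

Lemma shrinkv_inj : {in ~: S &, injective shrinkv}.
Proof. by move=> x v _; rewrite inE => vS /eqP; rewrite shrinkv_eq // => /eqP. Qed.

Lemma shrink_edge_outer es : val es \notin inner_edges.
Proof. by case: es => e; rewrite /= inE. Qed.

Lemma expandE_outer Fs e : e \in expandE Fs -> e \notin inner_edges.
Proof. by case/imsetP => es _ ->; apply: shrink_edge_outer. Qed.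

Lemma cut_outer e : e \in cut S -> e \notin inner_edges.
Proof. by rewrite !inE; case: (_ \in S); case: (_ \in S). Qed.

Lemma incident_inner e v : e \in inner_edges -> incident e v -> v \in S.
Proof. by rewrite inE /incident => /andP [xS yS] /orP [] /eqP <-. Qed.

Lemma incident_cut e v : v \in S -> e \notin inner_edges -> incident e v -> e \in cut S.
Proof.
rewrite !inE /incident => vS; case: (gends e) => x y /=.
by case: eqP => [->|_]; case: eqP => [->|_]; rewrite ?vS //=; case: (x \in S).
Qed.

Lemma incident_shrinkv es v : v \notin S -> incident es (shrinkv v) = incident (val es) v.
Proof. by move=> vS; rewrite /incident gends_shrink /= !shrinkv_eq. Qed.

Lemma incident_None es : incident es None = (val es \in cut S).
Proof.
rewrite /incident gends_shrink /= !shrinkv_None inE.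
by move: (shrink_edge_outer es); rewrite inE; case: (_ \in S); case: (_ \in S).
Qed.

Lemma imset_sep (T U : finType) (f : T -> U) (D : {set T}) (p : pred U) :
  f @: [set x in D | p (f x)] = [set y in f @: D | p y].
Proof.
apply/setP => y; rewrite inE; apply/imsetP/andP => [[x]|[/imsetP [x xD ->] py]].
  by rewrite inE => /andP [xD px] ->; split => //; apply/imsetP; exists x.
by exists x; rewrite // inE xD.
Qed.

Lemma deg_expandE Fs v : v \notin S -> deg_in (expandE Fs) v = deg_in Fs (shrinkv v).
Proof.
move=> vS; rewrite /deg_in /expandE -imset_sep card_imset; last exact: val_inj.
by apply: eq_card => es; rewrite !inE incident_shrinkv.
Qed.

Lemma deg_None Fs : deg_in Fs None = #|expandE Fs :&: cut S|.
Proof.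
rewrite /deg_in (_ : expandE Fs :&: cut S = [set e in val @: Fs | e \in cut S]); last first.
  by apply/setP => e; rewrite in_setI in_set.
rewrite -imset_sep card_imset; last exact: val_inj.
by apply: eq_card => es; rewrite !inE incident_None inE.
Qed.

Lemma expandE_shrinkE F : expandE (shrinkE F) = F :\: inner_edges.
Proof.
apply/setP => e; rewrite in_setD andbC; apply/imsetP/andP => [[es]|[eF eout]].
  by rewrite inE => esF ->; split=> //; apply: shrink_edge_outer.
by move: eout; rewrite inE => eout; exists (Sub e eout : gE (shrink S)); rewrite ?inE SubK.
Qed.

Lemma deg_shrinkE F v : v \notin S -> deg_in (shrinkE F) (shrinkv v) = deg_in F v.
Proof.
move=> vS; rewrite -deg_expandE // expandE_shrinkE; apply: deg_in_eq => e ev.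
rewrite in_setD; case: (boolP (e \in inner_edges)) => //; rewrite inE => /andP [].
by move: ev; rewrite /incident => /orP [] /eqP ->; rewrite (negbTE vS) // => _.
Qed.

Lemma deg_shrinkE_None F : deg_in (shrinkE F) None = #|F :&: cut S|.
Proof.
rewrite deg_None expandE_shrinkE; apply: eq_card => e; rewrite !in_setI in_setD.
by case: (boolP (e \in cut S)) => eS; rewrite ?andbF ?andbT ?(cut_outer eS).
Qed.

Lemma deg_expandE_setU Fs F v : v \notin S ->
  {in F, forall e, incident e v -> e \in expandE Fs} ->
  deg_in (expandE Fs :|: F) v = deg_in Fs (shrinkv v).
Proof.
move=> vS sub; rewrite -deg_expandE //; apply: deg_in_eq => e ev; rewrite in_setU.
by apply/orP/idP => [[//|/sub/(_ ev)]|]; [|left].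
Qed.

Lemma lam_subgraph_shrinkE F a b : a \notin S -> b \notin S ->
  #|F :&: cut S| = 1 -> lam_subgraph F a b -> lam_subgraph (shrinkE F) (shrinkv a) (shrinkv b).
Proof.
move=> aS bS cut1 /lam_subgraphP [da db dv]; apply/lam_subgraphP; rewrite !deg_shrinkE //.
split=> // w; have [->|[v vS ->]] := shrinkvP w; first by rewrite deg_shrinkE_None.
by rewrite !shrinkv_eq // deg_shrinkE //; apply: dv.
Qed.

Lemma lam_subgraph_shrinkE_None F a b : a \notin S -> b \in S ->
  #|F :&: cut S| = 3 -> lam_subgraph F a b -> lam_subgraph (shrinkE F) (shrinkv a) None.
Proof.
move=> aS bS cut3 /lam_subgraphP [da db dv]; apply/lam_subgraphP.
rewrite deg_shrinkE // deg_shrinkE_None; split=> // w; have [->|[v vS ->]] := shrinkvP w.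
  by rewrite eqxx.
rewrite shrinkv_eq // deg_shrinkE // => va _; apply: dv => //.
by apply: contraNneq vS => ->.
Qed.

Lemma connect_shrinkv_ends e :
  connect (@adj (shrink S)) (shrinkv (gends e).1) (shrinkv (gends e).2).
Proof.
have [|eout] := boolP (e \in inner_edges).
  rewrite inE => /andP [xS yS].
  have [-> ->] : shrinkv (gends e).1 = None /\ shrinkv (gends e).2 = None.
    by split; apply/eqP; rewrite shrinkv_None.
  exact: connect0.
move: (eout); rewrite inE => eout'; apply: connect1; apply/existsP.
by exists (Sub e eout' : gE (shrink S)); rewrite gends_shrink SubK eqxx.
Qed.

Lemma shrink_connected s : s \in S -> connected G -> connected (shrink S).
Proof.
move=> sS connG.
have onto w : exists v, w = shrinkv v.
  have [->|[v _ ->]] := shrinkvP w; last by exists v.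
  by exists s; apply/esym/eqP; rewrite shrinkv_None.
have adj_connect u v : adj u v -> connect (@adj (shrink S)) (shrinkv u) (shrinkv v).
  case/existsP => e /orP [] /eqP ends; have := connect_shrinkv_ends e; rewrite ends //=.
  by rewrite (sym_connect_sym (@adj_sym (shrink S))).
move=> w1 w2; have [v1 ->] := onto w1; have [v2 ->] := onto w2.
have /connectP [p path_p ->] := connG v1 v2.
elim: p v1 path_p => [|v p IHp] u /=; first by rewrite connect0.
by case/andP => uv /IHp; apply: connect_trans (adj_connect _ _ uv).
Qed.

Definition shrink_side A (c : bool) : {set gV (shrink S)} :=
  [set w | if w is Some u then val u \in A else c].

Lemma shrink_side_shrinkv A c v : (shrinkv v \in shrink_side A c) = if v \in S then c else v \in A.
Proof.
rewrite inE /shrinkv; case: insubP => [u /negbTE -> <- //|/negPn -> //].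
Qed.

Lemma shrink_side_None A c : (None \in shrink_side A c) = c.
Proof. by rewrite inE. Qed.

Lemma bipartition_shrink_side A c : bipartition A ->
  {in cut S, forall e, (aend A e \in S) = c} -> bipartition (shrink_side A c).
Proof.
move=> bipA aendS es; have := bipA (val es); have {aendS} := aendS (val es).
rewrite gends_shrink !shrink_side_shrinkv inE /aend.
move: (shrink_edge_outer es); rewrite inE.
case: ((gends (val es)).1 \in A); case: ((gends (val es)).2 \in A) => //=;
case: ((gends (val es)).1 \in S); case: ((gends (val es)).2 \in S) => //=;
by case: c => //= _ /(_ isT).
Qed.

End Shrink.

Lemma bipartition_unique (G : mgraph) (P Q : {set gV G}) :
  connected G -> bipartition P -> bipartition Q -> P = Q \/ P = ~: Q.
Proof.
move=> connG bipP bipQ; pose same := [pred v | (v \in P) == (v \in Q)].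
have closed_same : closed (@adj G) same.
  move=> x y /existsP [e /orP [] /eqP ends]; move: (bipP e) (bipQ e); rewrite ends /= !inE;
  by case: (x \in P); case: (y \in P); case: (x \in Q); case: (y \in Q).
have [v0 _|noV] := pickP [pred v : gV G | true]; last by left; apply/setP => v; have := noV v.
have same_v0 v : same v = same v0 by apply: (closed_connect closed_same (connG v v0)).
have [h0|h0] := boolP (same v0); [left|right]; apply/setP => v; move: (same_v0 v) h0;
  by rewrite /= ?inE; case: (v \in P); case: (v \in Q); case: (v0 \in P); case: (v0 \in Q).
Qed.

Section Rho.
Variable G : mgraph.
Implicit Types (A : {set gV G}) (a b u w : gV G).

Definition lam_pairs A : {set gV G * gV G} := [set p | lam_matchable A p.1 p.2].

Lemma lam_matchable_neq A a b : lam_matchable A a b -> a != b.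
Proof. by case/and3P => aA bA _; apply: contraNneq bA => <-. Qed.

Lemma lam_matchableC A a b : lam_matchable (~: A) a b = lam_matchable A b a.
Proof.
rewrite !lam_matchableE !inE negbK; case: (a \in A); case: (b \in A) => //=.
by apply/existsP/existsP => -[F lamF]; exists F; rewrite lam_subgraphC.
Qed.

Lemma rhoC A : rho (~: A) = rho A.
Proof.
have swapK : involutive (fun p : gV G * gV G => (p.2, p.1)) by case.
rewrite /rho -(card_imset (lam_pairs A) (inv_inj swapK)); apply: eq_card => p.
rewrite inE; apply/idP/imsetP => [lamp|[q]]; last by rewrite inE => lamq ->; rewrite lam_matchableC.
by exists (p.2, p.1); [rewrite inE /= -lam_matchableC | case: p lamp].
Qed.

Lemma rho_atC A u : rho_at (~: A) u = rho_at A u.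
Proof. by apply: eq_card => w; rewrite !inE !lam_matchableC orbC. Qed.

Lemma rho_bipartition_unique (P Q : {set gV G}) :
  connected G -> bipartition P -> bipartition Q ->
  rho P = rho Q /\ forall u, rho_at P u = rho_at Q u.
Proof.
move=> connG bipP bipQ; case: (bipartition_unique connG bipP bipQ) => ->; first by [].
by split=> [|u]; rewrite ?rhoC ?rho_atC.
Qed.

Lemma rho_split A u : rho A = #|lam_pairs A :&: setX [set~ u] [set~ u]| + rho_at A u.
Proof.
rewrite /rho -/(lam_pairs A) -(cardsID (setX [set~ u] [set~ u])); congr (_ + _).
set R := [set w | lam_matchable A u w]; set L := [set w | lam_matchable A w u].
have not_uu : ~~ lam_matchable A u u by apply/negP => /lam_matchable_neq; rewrite eqxx.
have -> : lam_pairs A :\: setX [set~ u] [set~ u] = pair u @: R :|: (fun w => (w, u)) @: L.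
  apply/setP => -[x y]; rewrite !inE /= negb_and !negbK; apply/idP/orP.
    case/andP => /orP [] /eqP -> lam_xy; [left|right]; apply/imsetP.
      by exists y; rewrite ?inE.
    by exists x; rewrite ?inE.
  by case=> /imsetP [w]; rewrite inE => lamw [-> ->]; rewrite lamw eqxx ?orbT.
rewrite cardsU (_ : _ :&: _ = set0) ?cards0 ?subn0; last first.
  apply/setP => -[x y]; rewrite !inE; apply/negbTE/andP.
  move=> -[/imsetP [w wR [-> ->]] /imsetP [w' _ [_ wu]]].
  by move: wR; rewrite inE wu (negbTE not_uu).
rewrite (card_imset _ (can_inj (f := pair u) (g := snd) (fun=> erefl))).
rewrite (card_imset _ (can_inj (f := fun w => (w, u)) (g := fst) (fun=> erefl))).
rewrite /rho_at (_ : [set w | _ || _] = R :|: L); last by apply/setP => w; rewrite !inE.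
rewrite cardsU (_ : R :&: L = set0) ?cards0 ?subn0 //.
apply/setP => w; rewrite !inE; apply/negbTE/andP => -[/and3P [uA _ _] /and3P [_ uB _]].
by rewrite uA in uB.
Qed.

End Rho.

Lemma rho_at_None (G : mgraph) (S : {set gV G}) (B : {set gV (shrink S)}) :
  rho_at B None =
  #|[set v in ~: S | lam_matchable B None (shrinkv S v) || lam_matchable B (shrinkv S v) None]|.
Proof.
rewrite /rho_at -(card_in_imset (f := shrinkv S)) => [|x v]; last first.
  by rewrite !inE => /andP [xS _] /andP [vS _]; apply: shrinkv_inj; rewrite inE.
apply: eq_card => w; rewrite inE; apply/idP/imsetP => [lamw|[v]]; last first.
  by rewrite inE => /andP [_ lamv] ->.
have [wN|[v vS wv]] := shrinkvP w.
  by move: lamw; rewrite wN => /orP [] /lam_matchable_neq; rewrite eqxx.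
by exists v; rewrite // !inE vS -wv.
Qed.

Section ShrinkTight.
Variables (G : mgraph) (A S : {set gV G}) (c : bool).
Hypotheses (bipA : bipartition A) (cubicG : cubic G) (tightS : tight_cut S).
Hypothesis aendS : {in cut S, forall e, (aend A e \in S) = c}.
Implicit Types (F : {set gE G}) (a b v : gV G).

Local Notation A' := (shrink_side S A c).

Lemma card_lam_cut_outside F a b : a \notin S -> b \notin S -> a \in A -> b \notin A ->
  lam_subgraph F a b -> #|F :&: cut S| = 1.
Proof.
move=> aS bS aA bA lamF; case: c aendS => aendS'.
  have := card_lam_cut bipA cubicG tightS aendS' aA bA lamF.
  by rewrite (negbTE aS) (negbTE bS); lia.
have tightC : tight_cut (~: S) by apply/tight_cutC.
have aendC : {in cut (~: S), forall e, aend A e \in ~: S}.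
  by move=> e; rewrite cutC in_setC => eS; rewrite (aendS' e eS).
by have := card_lam_cut bipA cubicG tightC aendC aA bA lamF; rewrite cutC !inE aS bS; lia.
Qed.

Lemma lam_subgraph_expandE (Fs : {set gE (shrink S)}) a b : a \notin S -> b \notin S ->
  lam_subgraph Fs (shrinkv S a) (shrinkv S b) -> exists F, lam_subgraph F a b.
Proof.
move=> aS bS /lam_subgraphP [da db dv].
have /cards1P [e cutFs] : #|expandE Fs :&: cut S| == 1.
  by rewrite -deg_None dv // eq_sym shrinkv_None ?aS ?bS.
have /setIP [eFs eS] : e \in expandE Fs :&: cut S by rewrite cutFs set11.
have [M pmM eM] := perfect_matching_edge bipA cubicG e.
have cutM := tight_cut_matching_edge tightS pmM eM eS.
have cut_eq e' : e' \in cut S -> (e' \in expandE Fs) = (e' \in M).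
  move=> e'S; move: (cutFs) (cutM) => /setP/(_ e') + /setP/(_ e').
  by rewrite !in_setI e'S !andbT => -> ->.
pose F := expandE Fs :|: (M :&: inner_edges S).
have dout v : v \notin S -> deg_in F v = deg_in Fs (shrinkv S v).
  move=> vS; apply: deg_expandE_setU => // e' /setIP [_ e'in] /(incident_inner e'in).
  by rewrite (negbTE vS).
have din v : v \in S -> deg_in F v = 1.
  move=> vS; rewrite -(pmM v); apply: deg_in_eq => e' e'v; rewrite in_setU in_setI.
  have [e'in|e'out] := boolP (e' \in inner_edges S).
    by rewrite (negbTE (contraL (@expandE_outer _ _ Fs e') e'in)) andbT.
  by rewrite andbF orbF cut_eq // (incident_cut vS e'out e'v).
exists F; apply/lam_subgraphP; rewrite !dout //; split=> // v va vb.
have [vS|vS] := boolP (v \in S); first exact: din.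
by rewrite dout // dv // shrinkv_eq.
Qed.

Lemma lam_matchable_shrink a b : a \notin S -> b \notin S ->
  lam_matchable A a b = lam_matchable A' (shrinkv S a) (shrinkv S b).
Proof.
move=> aS bS; rewrite !lam_matchableE !shrink_side_shrinkv (negbTE aS) (negbTE bS).
case: (boolP (a \in A)) => aA; case: (boolP (b \in A)) => bA //=.
apply/existsP/existsP => [[F lamF]|[Fs /(lam_subgraph_expandE aS bS) [F lamF]]]; last by exists F.
exists (shrinkE S F); apply: lam_subgraph_shrinkE => //.
exact: card_lam_cut_outside aS bS aA bA lamF.
Qed.

Lemma card_lam_pairs_shrink :
  #|lam_pairs A :&: setX (~: S) (~: S)| = #|lam_pairs A' :&: setX [set~ None] [set~ None]|.
Proof.
pose f p := (shrinkv S p.1, shrinkv S p.2).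
rewrite -(card_in_imset (f := f)) => [|[x y] [x' y']]; last first.
  rewrite !inE /= => /and3P [_ xS yS] /and3P [_ x'S y'S] [ex ey].
  by congr pair; apply: (shrinkv_inj (S := S)); rewrite ?inE.
apply: eq_card => -[w1 w2]; rewrite !inE /=; apply/imsetP/idP => [[[x y]]|].
  rewrite !inE /= => /andP [lamxy /andP [xS yS]] [-> ->].
  by rewrite -lam_matchable_shrink // lamxy !shrinkv_None xS yS.
case/andP => + /andP [w1N w2N].
have [w1E|[x xS ->]] := shrinkvP w1; first by rewrite w1E in w1N.
have [w2E|[y yS ->]] := shrinkvP w2; first by rewrite w2E in w2N.
by move=> lamw; exists (x, y) => //; rewrite !inE /= (lam_matchable_shrink xS yS) lamw xS yS.
Qed.

End ShrinkTight.

Lemma card_setX_quadrants (T : finType) (E : {set T * T}) (K : {set T}) :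
  #|E| = #|E :&: setX K K| + #|E :&: setX K (~: K)| + #|E :&: setX (~: K) K|
         + #|E :&: setX (~: K) (~: K)|.
Proof.
rewrite -(cardsID (setX K setT) E).
rewrite -(cardsID (setX setT K) (E :&: _)) -(cardsID (setX setT K) (E :\: _)).
rewrite !addnA; congr (_ + _ + _ + _); apply: eq_card => -[x y]; rewrite !inE /=;
by case: ((x, y) \in E); case: (x \in K); case: (y \in K).
Qed.

Section TightCutDecomposition.
Variables (G : mgraph) (A X : {set gV G}).
Hypotheses (bipA : bipartition A) (cubicG : cubic G) (tightX : tight_cut X).
Hypothesis aendX : {in cut X, forall e, aend A e \in X}.
Implicit Types (F : {set gE G}) (a b v : gV G).

Local Notation C1 := (shrink_side (~: X) A false).
Local Notation C2 := (shrink_side X A true).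

Lemma lam_subgraph_glue (F1 : {set gE (shrink (~: X))}) (F2 : {set gE (shrink X)}) a b :
  a \in X -> b \notin X ->
  lam_subgraph F1 (shrinkv (~: X) a) None -> lam_subgraph F2 None (shrinkv X b) ->
  lam_subgraph (expandE F1 :|: expandE F2) a b.
Proof.
move=> aX bX /lam_subgraphP [da d1N dv1] /lam_subgraphP [d2N db dv2].
have inCX v : (v \notin ~: X) = (v \in X) by rewrite inE negbK.
have cut_sub (E : {set gE G}) : #|E :&: cut X| = 3 -> cut X \subset E.
  move=> cut3; apply/setIidPr/eqP.
  by rewrite eqEcard subsetIr (card_tight_cut bipA cubicG tightX aendX) cut3.
have sub1 : cut X \subset expandE F1 by apply: cut_sub; rewrite -(cutC X) -deg_None.
have sub2 : cut X \subset expandE F2 by apply: cut_sub; rewrite -deg_None.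
have dX v : v \in X -> deg_in (expandE F1 :|: expandE F2) v = deg_in F1 (shrinkv (~: X) v).
  move=> vX; apply: deg_expandE_setU; rewrite ?inCX // => e eF2 ev.
  exact/(subsetP sub1)/(incident_cut vX (expandE_outer eF2) ev).
have dY v : v \notin X -> deg_in (expandE F1 :|: expandE F2) v = deg_in F2 (shrinkv X v).
  move=> vX; rewrite setUC; apply: deg_expandE_setU => // e eF1 ev.
  apply/(subsetP sub2); rewrite -(cutC X).
  by apply: incident_cut (expandE_outer eF1) ev; rewrite inE.
apply/lam_subgraphP; rewrite dX // dY //; split=> // v va vb.
have [vX|vX] := boolP (v \in X).
  by rewrite dX // dv1 // ?shrinkv_eq ?shrinkv_None ?inCX // inE negbK.
by rewrite dY // dv2 // ?shrinkv_eq ?shrinkv_None.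
Qed.

Lemma lam_matchable_cross a b : a \in X -> b \notin X ->
  lam_matchable A a b =
  lam_matchable C1 (shrinkv (~: X) a) None && lam_matchable C2 None (shrinkv X b).
Proof.
move=> aX bX; have aX' : a \notin ~: X by rewrite inE negbK.
rewrite !lam_matchableE !shrink_side_shrinkv !shrink_side_None (negbTE aX') (negbTE bX) /=.
case: (boolP (a \in A)) => aA; case: (boolP (b \in A)) => bA //=; rewrite ?andbF //.
apply/existsP/andP => [[F lamF]|[/existsP [F1 lamF1] /existsP [F2 lamF2]]]; last first.
  by exists (expandE F1 :|: expandE F2); apply: lam_subgraph_glue.
have cut3 : #|F :&: cut X| = 3.
  by have := card_lam_cut bipA cubicG tightX aendX aA bA lamF; rewrite aX (negbTE bX); lia.
split; apply/existsP.
  exists (shrinkE (~: X) F); apply: lam_subgraph_shrinkE_None lamF; rewrite ?cutC //.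
  by rewrite inE.
exists (shrinkE X F); rewrite lam_subgraphC.
by apply: lam_subgraph_shrinkE_None bX aX cut3 _; rewrite lam_subgraphC.
Qed.

Lemma card_lam_pairs_cross :
  #|lam_pairs A :&: setX X (~: X)| = rho_at C1 None * rho_at C2 None.
Proof.
have C1N w : lam_matchable C1 None w = false by rewrite lam_matchableE shrink_side_None.
have C2N w : lam_matchable C2 w None = false by rewrite lam_matchableE shrink_side_None andbF.
rewrite !rho_at_None setCK -cardsX; apply: eq_card => -[a b]; rewrite !inE /= C1N C2N orbF.
case: (boolP (a \in X)) => aX; case: (boolP (b \in X)) => bX; rewrite ?andbF //=.
by rewrite (lam_matchable_cross aX bX) andbT.
Qed.

Lemma lam_pairs_reverse : lam_pairs A :&: setX (~: X) X = set0.
Proof.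
apply/setP => -[a b]; rewrite !inE /=; apply/negbTE/and3P => -[lamab aX bX].
case/and3P: lamab => aA bA /existsP [F lamF].
by have := card_lam_cut bipA cubicG tightX aendX aA bA lamF; rewrite bX (negbTE aX); lia.
Qed.

Lemma aend_cutC : {in cut (~: X), forall e, (aend A e \in ~: X) = false}.
Proof. by move=> e; rewrite cutC => eX; rewrite in_setC (aendX eX). Qed.

Lemma rho_tight_cut :
  rho A + rho_at C1 None + rho_at C2 None =
  rho C1 + rho C2 + rho_at C1 None * rho_at C2 None.
Proof.
have tightCX : tight_cut (~: X) by apply/tight_cutC.
have inside1 := card_lam_pairs_shrink bipA cubicG tightCX aend_cutC; rewrite setCK in inside1.
have inside2 := card_lam_pairs_shrink bipA cubicG tightX aendX.
rewrite (rho_split C1 None) (rho_split C2 None) -inside1 -inside2.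
rewrite /rho -/(lam_pairs A) (card_setX_quadrants (lam_pairs A) X).
by rewrite card_lam_pairs_cross lam_pairs_reverse cards0; lia.
Qed.

End TightCutDecomposition.

Import GRing.Theory Num.Theory.
Local Open Scope ring_scope.

(* H1 := H / Xbar -> xbar is [shrink H (~: X)], with xbar = [None];
   H2 := H / X -> x is [shrink H X], with x = [None]. *)
Theorem corollary2p7 (H : mgraph) (A X : {set gV H}) :
  loopless H -> connected H -> cubic H -> bipartition A ->
  tight_cut X ->
  forall A1 : {set gV (shrink (~: X))}, bipartition A1 ->
  forall A2 : {set gV (shrink X)}, bipartition A2 ->
  (rho A)%:Z =
    (rho A1)%:Z - (rho_at A1 None)%:Z + (rho A2)%:Z - (rho_at A2 None)%:Z
    + (rho_at A1 None)%:Z * (rho_at A2 None)%:Z.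
Proof.
move=> _ connH cubicH bipA tightX A1 bipA1 A2 bipA2.
wlog aendX : A bipA / {in cut X, forall e, aend A e \in X}.
  move=> main; have [|bendX] := tight_cut_shore bipA cubicH tightX; first exact: main.
  by rewrite -rhoC; apply: main (bipartitionC bipA) _ => e eX; rewrite aendC bendX.
have [e0 e0X] : exists e0, e0 \in cut X.
  by apply/set0Pn; rewrite -card_gt0 (card_tight_cut bipA cubicH tightX aendX).
have b0X : bend A e0 \in ~: X.
  by move: (e0X); rewrite (cutE A) (aendX _ e0X) inE; case: (_ \in X).
have conn1 := shrink_connected b0X connH; have conn2 := shrink_connected (aendX _ e0X) connH.
have bip1 := bipartition_shrink_side bipA (aend_cutC aendX).
have bip2 := bipartition_shrink_side bipA aendX.
have [-> ->] := rho_bipartition_unique conn1 bipA1 bip1.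
have [-> ->] := rho_bipartition_unique conn2 bipA2 bip2.
by have := rho_tight_cut bipA cubicH tightX aendX; lia.
Qed.
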